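(* In the setting of the context, let $\mathbf{X}\in\{0,1\}^E$ be the indicator vector of edges matched by MMP-ALG, and for $u\in U$ let $\mathbf{X}_u$ be the restriction of $\mathbf{X}$ to the coordinates in $E(u)$ (other entries set to $0$). Let $x^*_u=\sum_{e\in E(u)}x^*_e$ and let $\mathbf{e}_e$ be the unit vector with a $1$ only at coordinate $e$. Then, in the limit $T\to\infty$ with $|U|=o(\sqrt{T})$, $\Pr[\mathbf{X}_u=\mathbf{0}]=e^{-x^*_u}$ and $\Pr[\mathbf{X}_u=\mathbf{e}_e]=(1-e^{-x^*_u})\frac{x^*_e}{x^*_u}$ for every $e\in E(u)$.
   Context: Bipartite graph $G=(U,V,E)$; online rounds $t=1,\dots,T$, in each of which independently at most one $v\in V$ arrives, $v$ with probability $p_v$, $\sum_v p_v\le1$, $r_v=Tp_v\in[0,1]$. Each $u\in U$ can be matched at most once. $E(w)$ denotes the set of edges incident to $w$. $\mathbf{x}^*\in[0,1]^E$ satisfies $\sum_{e\in E(v)}x^*_e\le r_v$ for all $v\in V$ and $\sum_{e\in E(u)}x^*_e\le1$ for all $u\in U$. MMP-ALG: when $v$ arrives, sample at most one edge $e\in E(v)$, each $e$ with probability $x^*_e/r_v$; if $e=(u,v)$ is sampled and $u$ is still unmatched, match $e$, otherwise skip. *)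

From HB Require Import structures.
From mathcomp Require Import all_boot all_order all_algebra.
From mathcomp Require Import reals.
From mathcomp Require Import sequences exp.
Set Implicit Arguments. Unset Strict Implicit. Unset Printing Implicit Defensive.
Import Order.TTheory GRing.Theory Num.Theory.
Local Open Scope ring_scope.

Section MMP.
Variables (R : realType) (U V : finType).
Variable (E : {set U * V}).
Variable (T : nat).
Variable (p : V -> R).
Variable (x : U * V -> R).       (* the fractional solution x^* (only values on E matter) *)

Definition rate (v : V) : R := T%:R * p v.
Definition Ev (v : V) : {set U * V} := [set e in E | e.2 == v].
Definition Eu (u : U) : {set U * V} := [set e in E | e.1 == u].
Definition xu (u : U) : R := \sum_(e in Eu u) x e.

Definition instance_ok : Prop :=
  [/\ (forall v, 0 <= p v) /\ \sum_v p v <= 1,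
      (forall v, 0 <= rate v <= 1),
      (forall e, e \in E -> 0 <= x e <= 1),
      (forall v, \sum_(e in Ev v) x e <= rate v)
    & (forall u, \sum_(e in Eu u) x e <= 1)].

(* Outcome of one round: None = nobody arrives;
   Some (v, None) = v arrives and no edge is sampled;
   Some (v, Some e) = v arrives and edge e (in E(v)) is sampled. *)
Definition outcome := option (V * option (U * V)).

Definition round_pr (o : outcome) : R :=
  match o with
  | None => 1 - \sum_v p v
  | Some (v, None) => p v * (1 - \sum_(e in Ev v) x e / rate v)
  | Some (v, Some e) => if e \in Ev v then p v * (x e / rate v) else 0
  end.

Definition traj := {ffun 'I_T -> outcome}.
Definition traj_pr (w : traj) : R := \prod_(t < T) round_pr (w t).

(* MMP-ALG: process the rounds in order; a sampled edge (u,v) is matched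
   iff u is still unmatched.  mU = matched vertices of U, M = matched edges. *)
Fixpoint run (s : seq outcome) (mU : {set U}) (M : {set U * V}) : {set U * V} :=
  match s with
  | [::] => M
  | Some (v, Some e) :: s' =>
      if (e \in Ev v) && (e.1 \notin mU) then run s' (e.1 |: mU) (e |: M)
      else run s' mU M
  | _ :: s' => run s' mU M
  end.

Definition matched (w : traj) : {set U * V} :=
  run [seq w t | t <- enum 'I_T] set0 set0.

Definition Xvec (w : traj) : {ffun U * V -> bool} :=
  [ffun e => (e \in E) && (e \in matched w)].
Definition Xu (w : traj) (u : U) : {ffun U * V -> bool} :=
  [ffun e => (e \in Eu u) && Xvec w e].
Definition zero_vec : {ffun U * V -> bool} := [ffun => false].
Definition unit_vec (e : U * V) : {ffun U * V -> bool} := [ffun f => f == e].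

Definition Pr (A : pred traj) : R := \sum_(w | A w) traj_pr w.

End MMP.

From HB Require Import structures.
From mathcomp Require Import all_boot all_order all_algebra.
From mathcomp Require Import reals.
From mathcomp Require Import sequences exp.
From mathcomp Require Import ring lra.
Set Implicit Arguments. Unset Strict Implicit. Unset Printing Implicit Defensive.
Import Order.TTheory GRing.Theory Num.Theory.
Local Open Scope ring_scope.

(* Only the first round that samples an edge of E(u) matters for u: that edge
   is matched and every later edge at u is skipped.  The rounds are i.i.d. and
   each samples a given e in E(u) with probability x_e/T, hence some edge of
   E(u) with probability x_u/T.  So, exactly,
     Pr[X_u = 0]   = (1 - x_u/T)^T,
     Pr[X_u = e_e] = sum_(t<T) (1 - x_u/T)^t x_e/T = (1 - (1 - x_u/T)^T) x_e/x_u,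
   and |(1 - a/T)^T - exp(-a)| <= a^2/T for 0 <= a <= T. *)

Section CompoundInterest.
Variable R : realType.

Lemma subrXX_le_natmul (y z : R) n : 0 <= y -> y <= z -> z <= 1 ->
  z ^+ n - y ^+ n <= n%:R * (z - y).
Proof.
move=> y0 yz z1; elim: n => [|n IH]; first by rewrite !expr0 subrr mul0r.
have yn0 : 0 <= y ^+ n by rewrite exprn_ge0.
have yn1 : y ^+ n <= 1 by rewrite exprn_ile1 //; lra.
have ynz : y ^+ n <= z ^+ n by rewrite lerXn2r // ?nnegrE; lra.
rewrite !exprS -natr1; nra.
Qed.

Lemma normr_pow_expR_le (n : nat) (a : R) : (0 < n)%N -> 0 <= a <= n%:R ->
  `|(1 - a / n%:R) ^+ n - expR (- a)| <= a ^+ 2 / n%:R.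
Proof.
move=> n0 /andP[a0 an]; have n_gt0 : 0 < n%:R :> R by rewrite ltr0n.
set b := a / n%:R.
have b0 : 0 <= b by rewrite divr_ge0 // ltW.
have b1 : b <= 1 by rewrite ler_pdivrMr // mul1r.
set z := expR (- b).
have -> : expR (- a) = z ^+ n by rewrite -expRM_natl /b mulrN mulrC divfK ?gt_eqF.
have z1 : z <= 1 by rewrite -expR0 ler_expR; lra.
have bz : 1 - b <= z by have := expR_ge1Dx (- b); rewrite -/z; lra.
(* [z <= 1 / (1 + b)] because [expR b >= 1 + b], whence [z - (1 - b) <= b ^ 2]. *)
have zb : z - (1 - b) <= b ^+ 2.
  have zeb : z * expR b = 1 by rewrite -expRD addNr expR0.
  have : z * (1 + b) <= 1.
    by rewrite -[X in _ <= X]zeb ler_wpM2l ?expR_ge0 // expR_ge1Dx.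
  nra.
rewrite distrC ger0_norm; last by rewrite subr_ge0 lerXn2r // ?nnegrE; lra.
apply: le_trans (subrXX_le_natmul n _ bz z1) _; first lra.
have -> : a ^+ 2 / n%:R = n%:R * b ^+ 2 by rewrite /b; field; rewrite gt_eqF.
by rewrite ler_pM2l.
Qed.

End CompoundInterest.

Section BigOps.
Variable R : realType.

Lemma sum_ffun_forall_prod (I J : finType) (P : I -> pred J) (F : I -> J -> R) :
  \sum_(f : {ffun I -> J} | [forall i, P i (f i)]) \prod_i F i (f i)
    = \prod_i \sum_(j | P i j) F i j.
Proof. by rewrite bigA_distr_big_dep; apply: eq_bigl => f; apply/forallP/familyP. Qed.

Lemma sum_exists_disjoint (I J : finType) (P : I -> pred J) (F : J -> R) :
  (forall i i' j, P i j -> P i' j -> i = i') ->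
  \sum_(j | [exists i, P i j]) F j = \sum_i \sum_(j | P i j) F j.
Proof.
move=> Puniq; rewrite (exchange_big_dep xpredT) //= big_mkcond /=.
apply: eq_bigr => j _; case: existsP => [[i Pij]|noP]; last first.
  by rewrite big_pred0 // => i; apply/negbTE/negP => Pij; apply: noP; exists i.
rewrite (big_pred1 i) // => i'; apply/idP/eqP => [Pi'j|->//].
exact: Puniq Pi'j Pij.
Qed.

Lemma sum_option (X : finType) (F : option X -> R) :
  \sum_o F o = F None + \sum_t F (Some t).
Proof.
rewrite (bigD1 None) //=; congr (_ + _).
rewrite (reindex_omap Some id) => [|[]] //.
by apply: eq_bigl => t; rewrite eqxx.
Qed.

Lemma ler_sum_mem (I : finType) (A : pred I) (F : I -> R) i : i \in A ->
  (forall j, j \in A -> 0 <= F j) -> F i <= \sum_(j in A) F j.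
Proof.
move=> iA F_ge0; rewrite (bigD1 i) //= lerDl.
by apply: sumr_ge0 => j /andP[/F_ge0].
Qed.

Lemma prodr_ord_before_at n (t : 'I_n) (A B : R) :
  \prod_(j < n) (if (j < t)%N then A else if j == t :> nat then B else 1) = A ^+ t * B.
Proof.
rewrite -(big_mkord xpredT (fun j => if (j < t)%N then A else if j == t then B else 1)).
rewrite (big_cat_nat (leq0n t) (ltnW (ltn_ord t))) /=.
rewrite (big_cat_nat (leqnSn t) (ltn_ord t)) /= big_nat1 ltnn eqxx.
rewrite (eq_big_nat _ _ (F2 := fun _ => A)); last by move=> i /andP[_ ->].
rewrite prodr_const_nat subn0 (eq_big_nat _ _ (F2 := fun _ => 1)); last first.
  by move=> i /andP[ti _]; rewrite ltnNge ltnW //= gtn_eqF.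
by rewrite big1_eq mulr1.
Qed.

Lemma sum_geometric_mul (c : R) n : \sum_(t < n) (1 - c) ^+ t * c = 1 - (1 - c) ^+ n.
Proof. by rewrite -mulr_suml -[RHS]opprB subrX1; ring. Qed.

End BigOps.

Section FirstHit.
Variables (U V : finType) (E : {set U * V}) (u : U).
Implicit Types (o : outcome U V) (s : seq (outcome U V)) (e f : U * V).

Definition hits o : bool :=
  if o is Some (v, Some e) then (e \in Ev E v) && (e.1 == u) else false.

Definition sampled_edge o : option (U * V) :=
  if o is Some (_, Some e) then Some e else None.

Definition draw e : outcome U V := Some (e.2, Some e).

Fixpoint first_hit s : option (U * V) :=
  if s is o :: s' then if hits o then sampled_edge o else first_hit s' else None.

Lemma hits_draw e : hits (draw e) = (e \in Eu E u).
Proof. by rewrite /= !inE eqxx andbT. Qed.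

Lemma sampled_edge_hits o e : hits o -> (sampled_edge o == Some e) = (o == draw e).
Proof.
case: o => [[v [f|]]|] //= /andP[]; rewrite inE => /andP[_ /eqP <-] _.
by apply/eqP/eqP => [[->]|[] _ ->].
Qed.

Lemma first_hitE s :
  first_hit s = if has hits s then sampled_edge (nth None s (find hits s)) else None.
Proof. by elim: s => //= o s ->; case: (hits o). Qed.

Lemma first_hit_Eu s e : first_hit s = Some e -> e \in Eu E u.
Proof.
elim: s => //= -[[v [f|]]|] s IH //=; case: ifP => // /andP[fv fu] [<-].
by move: fv; rewrite !inE fu => /andP[->].
Qed.

Lemma first_hit_eq_None s : (first_hit s == None) = ~~ has hits s.
Proof. by elim: s => //= -[[v [f|]]|] s IH //=; case: ifP. Qed.

Lemma run_matched s (mU : {set U}) (M : {set U * V}) f :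
  u \in mU -> f.1 == u -> (f \in run E s mU M) = (f \in M).
Proof.
elim: s mU M => [|o s IH] mU M uU fu //=.
case: o => [[v [e|]]|]; try exact: IH.
case: ifP => [/andP[_ e1N]|_]; last exact: IH.
rewrite IH ?inE ?uU ?orbT //; case: eqP => //= fe.
by move: e1N; rewrite -fe (eqP fu) uU.
Qed.

(* Until [u] is matched, only edges at other vertices enter [M]; the first
   sampled edge at [u] is then matched, and [run_matched] freezes it. *)
Lemma run_first_hit s (mU : {set U}) (M : {set U * V}) f :
  u \notin mU -> f \notin M -> f.1 == u ->
  (f \in run E s mU M) = (first_hit s == Some f).
Proof.
elim: s mU M => [|o s IH] mU M uU fM fu /=; first by rewrite (negbTE fM).
case: o => [[v [e|]]|]; try exact: IH.
rewrite /hits; case: (boolP (e \in Ev E v)) => ev /=; last exact: IH.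
case: (boolP (e.1 == u)) => eu.
  rewrite (eqP eu) uU run_matched ?inE ?eqxx // (negbTE fM) orbF.
  by rewrite eq_sym.
case: ifP => _; last exact: IH.
apply: IH => //; rewrite !inE negb_or ?uU ?fM ?andbT.
- by rewrite eq_sym.
- by apply: contra eu => /eqP <-.
Qed.

Section Trajectories.
Variable T : nat.
Implicit Type w : traj U V T.

Local Notation rounds w := [seq w t | t <- enum 'I_T].

Lemma size_rounds w : size (rounds w) = T.
Proof. by rewrite size_map size_enum_ord. Qed.

Lemma nth_rounds w (j : 'I_T) : nth None (rounds w) j = w j.
Proof. by rewrite (nth_map j) ?size_enum_ord // nth_ord_enum. Qed.

Lemma has_rounds w : has hits (rounds w) = [exists t, hits (w t)].
Proof.
apply/hasP/existsP => [[_ /mapP[t _ ->]]|[t]]; first by exists t.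
by exists (w t); rewrite ?map_f ?mem_enum.
Qed.

Lemma Xu_first_hit w f : Xu E w u f = (first_hit (rounds w) == Some f).
Proof.
rewrite !ffunE /matched; have [fu|fNu] := boolP (f.1 == u).
  rewrite run_first_hit ?in_set0 //.
  case: eqP => [/first_hit_Eu fEu|_]; last by rewrite !andbF.
  by rewrite fEu; move: fEu; rewrite inE => /andP[->].
have fEu : f \in Eu E u = false by rewrite inE (negbTE fNu) andbF.
by rewrite fEu; case: eqP => // /first_hit_Eu; rewrite fEu.
Qed.

Lemma Xu_eq0 w : (Xu E w u == zero_vec U V) = ~~ [exists t, hits (w t)].
Proof.
rewrite -has_rounds -first_hit_eq_None.
apply/eqP/eqP => [X0|FH]; last by apply/ffunP => f; rewrite Xu_first_hit FH !ffunE.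
case FH: first_hit => [f|] //.
by move/ffunP: X0 => /(_ f); rewrite Xu_first_hit FH eqxx ffunE.
Qed.

Lemma Xu_eq_unit w e : (Xu E w u == unit_vec e) = (first_hit (rounds w) == Some e).
Proof.
apply/eqP/eqP => [Xe|FH]; last by apply/ffunP => f; rewrite Xu_first_hit FH !ffunE eq_sym.
by move/ffunP: Xe => /(_ e); rewrite Xu_first_hit !ffunE eqxx => /eqP.
Qed.

Definition first_draw_cond e (t j : nat) o : bool :=
  if (j < t)%N then ~~ hits o else (j == t) ==> (o == draw e).

Lemma first_draw_at w e (t : 'I_T) :
  [forall j : 'I_T, first_draw_cond e t j (w j)] -> w t = draw e.
Proof. by move/forallP/(_ t); rewrite /first_draw_cond ltnn eqxx => /eqP. Qed.

Lemma first_draw_uniq w e (t t' : 'I_T) : e \in Eu E u ->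
  [forall j : 'I_T, first_draw_cond e t j (w j)] ->
  [forall j : 'I_T, first_draw_cond e t' j (w j)] -> t = t'.
Proof.
move=> eEu; wlog tt' : t t' / (t <= t')%N => [wlog_tt'|Ht Ht'].
  by case: (leqP t t') => [|/ltnW] tt' Ht Ht'; [apply: wlog_tt' | apply/esym/wlog_tt'].
apply/val_inj/eqP; rewrite eqn_leq tt' leqNgt; apply/negP => tt'_lt.
move/forallP/(_ t): Ht'; rewrite /first_draw_cond tt'_lt (first_draw_at Ht).
by rewrite hits_draw eEu.
Qed.

Lemma first_hit_rounds w e : e \in Eu E u ->
  (first_hit (rounds w) == Some e)
    = [exists t : 'I_T, [forall j : 'I_T, first_draw_cond e t j (w j)]].
Proof.
move=> eEu; rewrite first_hitE; case: findP => [noHit|i iT hit_i before_i].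
  apply/esym/existsP => -[t /first_draw_at wt]; move/hasP: noHit; apply.
  by exists (w t); rewrite ?map_f ?mem_enum // wt hits_draw.
rewrite (sampled_edge_hits _ (hit_i None)); rewrite size_rounds in iT.
have -> : i = Ordinal iT by []; rewrite nth_rounds.
have hitNj (j : 'I_T) : (j < i)%N -> ~~ hits (w j).
  by move=> ji; rewrite -nth_rounds before_i.
apply/eqP/existsP => [wi|[t Ht]].
  exists (Ordinal iT); apply/forallP => j; rewrite /first_draw_cond /=.
  case: ltnP => [/hitNj //|_]; apply/implyP => /eqP ji.
  by rewrite (_ : j = Ordinal iT) ?wi //; apply: val_inj.
have wt := first_draw_at Ht; case: (ltngtP i t) => [it|ti|it].
- move/forallP/(_ (Ordinal iT)): Ht; rewrite /first_draw_cond /= it.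
  by rewrite -nth_rounds hit_i.
- by move: (hitNj t ti); rewrite wt hits_draw eEu.
- by rewrite -wt (_ : Ordinal iT = t) //; apply: val_inj.
Qed.

End Trajectories.
End FirstHit.

Section RoundProbabilities.
Variables (R : realType) (U V : finType) (E : {set U * V}) (T : nat).
Variables (p : V -> R) (x : U * V -> R) (u : U).
Hypothesis ok : instance_ok E T p x.
Hypothesis T_gt0 : (0 < T)%N.

Local Notation r := (round_pr E T p x).

Lemma x_ge0 e : e \in E -> 0 <= x e.
Proof. by case: ok => _ _ x01 _ _ /x01/andP[]. Qed.

Lemma x_le_xu e : e \in Eu E u -> x e <= xu E x u.
Proof. by move=> eEu; apply: ler_sum_mem => // f; rewrite inE => /andP[/x_ge0]. Qed.

Lemma xu_bounds : 0 <= xu E x u <= 1.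
Proof.
case: ok => _ _ _ _ ->; rewrite andbT.
by apply: sumr_ge0 => f; rewrite inE => /andP[/x_ge0].
Qed.

Lemma edge_share_bounds e : e \in Eu E u -> 0 <= x e / xu E x u <= 1.
Proof.
move=> eEu; have xe_ge0 : 0 <= x e by apply: x_ge0; move: eEu; rewrite inE => /andP[].
have [->|xu_neq0] := eqVneq (xu E x u) 0; first by rewrite invr0 mulr0 lexx ler01.
have xu_gt0 : 0 < xu E x u by rewrite lt_neqAle eq_sym xu_neq0 (proj1 (andP xu_bounds)).
by rewrite divr_ge0 ?ler_pdivrMr ?mul1r ?x_le_xu // ltW.
Qed.

Lemma round_pr_draw e : e \in E -> r (draw e) = x e / T%:R.
Proof.
case: ok => _ _ _ xEv _ eE; have eEv : e \in Ev E e.2 by rewrite !inE eE eqxx.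
rewrite /= eEv /rate; have [pe0|pe_neq0] := eqVneq (p e.2) 0; last first.
  by field; rewrite pe_neq0 pnatr_eq0 -lt0n T_gt0.
(* If [p v = 0] then [rate v = 0] and [x e / rate v] is a junk value, but the
   constraint at [v] forces [x e = 0]. *)
have xe0 : x e = 0.
  have := xEv e.2; rewrite /rate pe0 mulr0 => sum_le0.
  apply/le_anti; rewrite x_ge0 // andbT; apply: le_trans sum_le0.
  by apply: ler_sum_mem => // f; rewrite inE => /andP[/x_ge0].
by rewrite pe0 xe0 !mul0r.
Qed.

Lemma sum_round_pr : \sum_o r o = 1.
Proof.
rewrite sum_option; have -> : \sum_(t : V * option (U * V)) r (Some t)
    = \sum_v \sum_oe r (Some (v, oe)) by rewrite pair_big; apply: eq_bigr => -[].
rewrite (eq_bigr p) /= => [|v _]; first ring.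
by rewrite sum_option /= -big_mkcond /= -mulr_sumr -mulr_suml; ring.
Qed.

Lemma sum_round_pr_hits : \sum_(o | hits E u o) r o = xu E x u / T%:R.
Proof.
rewrite (reindex_omap (@draw U V) (@sampled_edge U V)) => [|[[v [f|]]|] //=].
  rewrite /xu mulr_suml; apply: eq_big => [e|e]; first by rewrite hits_draw eqxx andbT.
  by rewrite hits_draw eqxx andbT inE => /andP[eE _]; rewrite round_pr_draw.
by rewrite inE => /andP[/andP[_ /eqP <-] _].
Qed.

Lemma sum_round_pr_nohit : \sum_(o | ~~ hits E u o) r o = 1 - xu E x u / T%:R.
Proof. by have := sum_round_pr; rewrite (bigID (hits E u)) /= sum_round_pr_hits; lra. Qed.

Lemma Pr_Xu_eq0 :
  Pr E p x (fun w : traj U V T => Xu E w u == zero_vec U V) = (1 - xu E x u / T%:R) ^+ T.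
Proof.
rewrite /Pr; under eq_bigl => w do rewrite Xu_eq0 negb_exists.
rewrite /traj_pr (sum_ffun_forall_prod (fun _ o => ~~ hits E u o) (fun _ => r)).
by rewrite prodr_const card_ord sum_round_pr_nohit.
Qed.

Lemma Pr_Xu_eq_unit e : e \in Eu E u ->
  Pr E p x (fun w : traj U V T => Xu E w u == unit_vec e)
    = (1 - (1 - xu E x u / T%:R) ^+ T) * (x e / xu E x u).
Proof.
move=> eEu; have eE : e \in E by move: eEu; rewrite inE => /andP[].
rewrite /Pr; under eq_bigl => w do rewrite Xu_eq_unit first_hit_rounds //.
rewrite sum_exists_disjoint => [|t t' w]; last exact: first_draw_uniq.
have -> : \sum_(t < T)
      \sum_(w : traj U V T | [forall j : 'I_T, first_draw_cond E u e t j (w j)])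
        traj_pr E p x w
    = \sum_(t < T) (1 - xu E x u / T%:R) ^+ t * (x e / T%:R).
  apply: eq_bigr => t _; rewrite /traj_pr.
  rewrite (sum_ffun_forall_prod (fun j : 'I_T => first_draw_cond E u e t j) (fun _ => r)).
  rewrite -prodr_ord_before_at.
  apply: eq_bigr => j _; rewrite /first_draw_cond; case: ltnP => _.
    exact: sum_round_pr_nohit.
  case: eqP => _ /=; last exact: sum_round_pr.
  by rewrite big_pred1_eq round_pr_draw.
have [xu0|xu_neq0] := eqVneq (xu E x u) 0.
  have xe0 : x e = 0 by apply/le_anti; rewrite x_ge0 // andbT -xu0 x_le_xu.
  by rewrite xe0 xu0 !mul0r mulr0 big1 // => t _; rewrite mulr0.
rewrite -sum_geometric_mul [RHS]mulr_suml; apply: eq_bigr => t _.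
by rewrite -mulrA; congr (_ * _); field; rewrite xu_neq0 pnatr_eq0 -lt0n T_gt0.
Qed.

End RoundProbabilities.

Lemma invr_nat_le_eventually (R : realType) (eps : R) : 0 < eps ->
  exists2 N : nat, (0 < N)%N & forall n, (N <= n)%N -> n%:R^-1 <= eps.
Proof.
move=> eps_gt0; exists (Num.Def.archi_bound eps^-1).+1 => // n Nn.
have n_gt0 : 0 < n%:R :> R by rewrite ltr0n; apply: leq_trans Nn.
rewrite -[leRHS]invrK lef_pV2 ?posrE ?invr_gt0 //; apply: ltW.
apply: lt_le_trans (archi_boundP _) _; first by rewrite invr_ge0 ltW.
by rewrite ler_nat ltnW.
Qed.

Theorem lemma3 (R : realType) (U V : nat -> finType)
  (E : forall T : nat, {set U T * V T})
  (p : forall T : nat, V T -> R)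
  (x : forall T : nat, U T * V T -> R) :
  (forall T : nat, (0 < T)%N -> instance_ok (E T) T (p T) (x T)) ->
  (* |U| = o(sqrt T) *)
  (forall eps : R, 0 < eps -> exists N : nat, forall T : nat, (N <= T)%N ->
     (#|U T|)%:R <= eps * Num.sqrt (T%:R : R)) ->
  forall eps : R, 0 < eps -> exists N : nat, forall T : nat, (N <= T)%N ->
    forall u : U T,
      `| Pr (E T) (p T) (x T) (fun w : traj (U T) (V T) T => Xu (E T) w u == zero_vec _ _) - expR (- xu (E T) (x T) u) | <= eps
      /\ forall e, e \in Eu (E T) u ->
        `| Pr (E T) (p T) (x T) (fun w : traj (U T) (V T) T => Xu (E T) w u == unit_vec e)
           - (1 - expR (- xu (E T) (x T) u)) * (x T e / xu (E T) (x T) u) | <= eps.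
Proof.
(* The error is at most [1/T] for each fixed [u]. *)
move=> ok _ eps eps_gt0; have [N N_gt0 invN] := invr_nat_le_eventually eps_gt0.
exists N => T NT u; have T_gt0 := leq_trans N_gt0 NT; have okT := ok T T_gt0.
set a := xu (E T) (x T) u; have /andP[a_ge0 a_le1] := xu_bounds u okT.
have approx : `|(1 - a / T%:R) ^+ T - expR (- a)| <= eps.
  apply: le_trans (normr_pow_expR_le T_gt0 _) _.
    by rewrite a_ge0 (le_trans a_le1) // ler1n.
  apply: le_trans (invN _ NT); rewrite -[leRHS]mul1r ler_pM2r ?invr_gt0 ?ltr0n //.
  by rewrite expr_le1.
split=> [|e eEu]; first by rewrite Pr_Xu_eq0.
have /andP[share_ge0 share_le1] := edge_share_bounds okT eEu.
rewrite Pr_Xu_eq_unit // -mulrBl normrM (ger0_norm share_ge0).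
rewrite [X in `|X|](_ : _ = - ((1 - a / T%:R) ^+ T - expR (- a))); last by ring.
by rewrite normrN; apply: le_trans approx; rewrite ler_piMr.
Qed.
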